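(* Let $q=p^s$ be a power of a prime $p$, and let $b,c$ be positive integers with $b'+c'=q^k$ for some positive integer $k$, where $b'=b/\gcd(b,c)$, $c'=c/\gcd(b,c)$. Then $(b,c;q)$ is admissible, and the threshold $n_0=n_0(b,c;q)$ satisfies $$\max\Big\{\frac{b}{q-1},\ \frac{b+c}{q}+k-1\Big\}\le n_0\le\frac{b+c-\gcd(b,c)}{q-1}.$$
   Context: The Hamming graph $H(n,q)$ has vertex set $\mathbb{Z}_q^n$, two vertices adjacent iff they differ in exactly one coordinate. A $(b,c)$-coloring of $H(n,q)$ is a surjective map onto $\{1,2\}$ in which each color-1 vertex has exactly $b$ neighbours of color 2 and each color-2 vertex has exactly $c$ neighbours of color 1. The parameters $(b,c;q)$ are admissible if a $(b,c)$-coloring of $H(n,q)$ exists for some $n$; in that case such colorings exist exactly for $n\ge n_0$ for some integer $n_0=n_0(b,c;q)$, called the threshold. *)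

From HB Require Import structures.
From mathcomp Require Import all_boot all_order all_algebra.
Set Implicit Arguments. Unset Strict Implicit. Unset Printing Implicit Defensive.

Definition hvert (n q : nat) := {ffun 'I_n -> 'I_q}.

Definition hadj (n q : nat) (u v : hvert n q) : bool :=
  #|[set i | u i != v i]| == 1.

(* A (b,c)-coloring of H(n,q): col u = true means colour 1, false means colour 2. *)
Definition is_bc_coloring (n q b c : nat) (col : hvert n q -> bool) : Prop :=
  [/\ (exists u, col u), (exists v, ~~ col v),
      (forall u, col u -> #|[set v | hadj u v & ~~ col v]| = b) &
      (forall u, ~~ col u -> #|[set v | hadj u v & col v]| = c)].

Definition has_bc_coloring (n q b c : nat) : Prop :=
  exists col : hvert n q -> bool, @is_bc_coloring n q b c col.

Definition admissible (b c q : nat) : Prop := exists n, has_bc_coloring n q b c.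

Definition is_threshold (b c q n0 : nat) : Prop :=
  forall n, has_bc_coloring n q b c <-> n0 <= n.

From HB Require Import structures.
From mathcomp Require Import all_boot all_order all_algebra.
From mathcomp Require Import zify ring lra finfield.
From Stdlib Require Classical_Prop Wf_nat.
Set Implicit Arguments. Unset Strict Implicit. Unset Printing Implicit Defensive.
Import Order.TTheory GRing.Theory Num.Theory.

(* Let f be the indicator of colour 1 and [csum j F x] the sum
   of F over the q vertices agreeing with x off coordinate j.  Counting
   neighbours gives \sum_j csum j f = (nq - b - c) f + c.  Summing f over a face
   with m free coordinates preserves this relation in the n - m other
   directions, where each [csum j] is positive semidefinite; when
   (n - m) q < b + c the eigenvalue (n - m) q - b - c is negative, so every such
   face holds exactly c q^m / (b + c) vertices of colour 1.  Since
   b + c = d q^k with c / d prime to q, this forces m >= k, whence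
   n >= ceil((b + c) / q) - 1 + k; and b <= n (q - 1) is the vertex degree.  Over F_q take the k x n matrix H whose columns are d copies of
   a representative of each point of the projective space P^(k-1)(F_q), so that
   n (q - 1) = d (q^k - 1).  Changing one coordinate of u moves the syndrome
   H u to every other vector of F_q^k in exactly d ways, so colouring u by
   whether H u lies in a fixed set of c / d vectors is a (b,c)-colouring.
   Colourings extend from n to n + 1 by ignoring the new coordinate, so the
   least admissible n is the threshold. *)

Lemma card_pair (I J : finType) (P : I -> J -> bool) :
  #|[set p : I * J | P p.1 p.2]| = \sum_i #|[set j | P i j]|.
Proof.
rewrite -sum1_card big_mkcond /=.
rewrite (eq_bigr (fun p => if P p.1 p.2 then 1 else 0)) => [|p _]; last by rewrite inE.
rewrite -(pair_bigA _ (fun i j => if P i j then 1 else 0)) /=.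
apply: eq_bigr => i _; rewrite -sum1_card [RHS]big_mkcond /=.
by apply: eq_bigr => j _; rewrite inE.
Qed.

Lemma card_notin n (T : seq 'I_n) : uniq T -> #|[pred j | j \notin T]| = n - size T.
Proof.
move=> uT; rewrite -[X in _ = X - _](card_ord n) -(card_uniqP uT) -(cardC (mem T)) addKn.
by apply: eq_card.
Qed.

Section HammingGraph.
Variables n q : nat.
Implicit Types u v : hvert n q.

Definition hupd u (j : 'I_n) (y : 'I_q) : hvert n q :=
  [ffun i => if i == j then y else u i].

Lemma hupd_eq u j y : hupd u j y j = y.
Proof. by rewrite ffunE eqxx. Qed.

Lemma hupd_neq u j y i : i != j -> hupd u j y i = u i.
Proof. by rewrite ffunE => /negbTE ->. Qed.

Lemma hupd_id u j : hupd u j (u j) = u.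
Proof. by apply/ffunP => i; rewrite ffunE; case: eqP => [->|]. Qed.

Lemma hupd_hupd u j y z : hupd (hupd u j y) j z = hupd u j z.
Proof. by apply/ffunP => i; rewrite !ffunE; case: eqP. Qed.

Lemma hupdC u i j y z : i != j -> hupd (hupd u i y) j z = hupd (hupd u j z) i y.
Proof.
move=> ij; apply/ffunP => t; rewrite !ffunE; case: (eqVneq t j) => [->|//].
by rewrite eq_sym (negbTE ij).
Qed.

Lemma hadjP u v : reflect (exists2 j, v = hupd u j (v j) & v j != u j) (hadj u v).
Proof.
apply: (iffP idP).
- rewrite /hadj => /cards1P [j Dj]; exists j; last first.
    by have := set11 j; rewrite -Dj inE eq_sym.
  apply/ffunP => i; rewrite ffunE; case: eqP => [->//|/eqP ij].
  by apply/eqP; apply: contraR ij => vi; rewrite -in_set1 -Dj inE eq_sym.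
- case=> j Dv vj; apply/cards1P; exists j.
  apply/setP => i; rewrite !inE; case: (eqVneq i j) => [->|ij].
  + by rewrite eq_sym vj.
  + by rewrite Dv hupd_neq // eqxx.
Qed.

Lemma card_hadj (P : pred (hvert n q)) u :
  #|[set v | hadj u v & P v]| =
  \sum_(j < n) #|[set y | (y != u j) && P (hupd u j y)]|.
Proof.
pose D := [set p : 'I_n * 'I_q | (p.2 != u p.1) && P (hupd u p.1 p.2)].
have -> : [set v | hadj u v & P v] = (fun p => hupd u p.1 p.2) @: D.
  apply/setP => v; rewrite inE; apply/andP/imsetP.
  - case=> /hadjP [j Dv vj] Pv; exists (j, v j) => //.
    by rewrite inE /= vj -Dv.
  - case=> [[j y]]; rewrite inE /= => /andP [yj Py] ->; split => //.
    by apply/hadjP; exists j; rewrite hupd_eq ?hupd_hupd ?hupd_id.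
rewrite card_in_imset ?(card_pair (fun j y => (y != u j) && P (hupd u j y))) //.
move=> [j y] [j' y']; rewrite !inE /=.
move=> /andP [yj _] /andP [y'j' _] E.
have := congr1 (fun w : hvert n q => w j) E; rewrite hupd_eq.
case: (eqVneq j j') => [<-|jj']; first by rewrite hupd_eq => ->.
by rewrite hupd_neq // => Ey; rewrite Ey eqxx in yj.
Qed.

Lemma card_hadj_all u : #|[set v | hadj u v]| = n * q.-1.
Proof.
rewrite (eq_card (B := [set v | hadj u v & predT v])); last by move=> v; rewrite !inE andbT.
rewrite card_hadj (eq_bigr (fun _ => q.-1)) => [|j _]; first by rewrite sum_nat_const card_ord.
by have := cardC1 (u j); rewrite card_ord => <-; apply: eq_card => y; rewrite !inE andbT.
Qed.

Lemma card_hadj_split (P : pred (hvert n q)) u :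
  #|[set v | hadj u v & P v]| + #|[set v | hadj u v & ~~ P v]| = n * q.-1.
Proof.
rewrite -(card_hadj_all u) -[RHS](cardsID [set v | P v]).
by congr (_ + _); apply: eq_card => v; rewrite !inE // andbC.
Qed.

End HammingGraph.

Section CoordinateSums.
Variables (R : realDomainType) (n q : nat).
Local Open Scope ring_scope.
Implicit Types (F : hvert n q -> R) (x : hvert n q).

Definition csum (j : 'I_n) F x : R := \sum_(y < q) F (hupd x j y).

Lemma csum_hupd j F x z : csum j F (hupd x j z) = csum j F x.
Proof. by apply: eq_bigr => y _; rewrite hupd_hupd. Qed.

Lemma csumC i j F x : csum i (csum j F) x = csum j (csum i F) x.
Proof.
case: (eqVneq i j) => [->//|ij].
rewrite /csum exchange_big /=; apply: eq_bigr => y _; apply: eq_bigr => z _.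
by rewrite hupdC.
Qed.

Lemma csum_csum j F x : csum j (csum j F) x = q%:R * csum j F x.
Proof.
rewrite {1}/csum (eq_bigr (fun _ => csum j F x)) => [|y _]; last exact: csum_hupd.
by rewrite sumr_const card_ord mulr_natl.
Qed.

Lemma csum_affine j F a b x :
  csum j (fun z => a * F z + b) x = a * csum j F x + q%:R * b.
Proof. by rewrite /csum big_split /= -mulr_sumr sumr_const card_ord mulr_natl. Qed.

Lemma eq_csum j F G : F =1 G -> csum j F =1 csum j G.
Proof. by move=> FG x; apply: eq_bigr => y _. Qed.

Lemma csum_sum (I : finType) j (H : I -> hvert n q -> R) x :
  csum j (fun z => \sum_i H i z) x = \sum_i csum j (H i) x.
Proof. by rewrite /csum exchange_big. Qed.

Lemma sum_csum j F : \sum_x csum j F x = q%:R * \sum_x F x.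
Proof.
pose swap (p : hvert n q * 'I_q) := (hupd p.1 j p.2, p.1 j).
have swapK : involutive swap by case=> x y; rewrite /swap /= hupd_hupd hupd_eq hupd_id.
rewrite /csum pair_bigA /= (reindex_inj (inv_inj swapK)) /=.
under eq_bigr do rewrite hupd_hupd hupd_id.
rewrite -[LHS]/(\sum_(p : hvert n q * 'I_q) (fun x (_ : 'I_q) => F x) p.1 p.2).
rewrite -pair_bigA mulr_sumr /=.
by apply: eq_bigr => x _; rewrite sumr_const card_ord mulr_natl.
Qed.

(* [csum j] is [q] times an orthogonal projection, hence positive semidefinite. *)
Lemma csum_form_ge0 j F : (0 < q)%N -> 0 <= \sum_x F x * csum j F x.
Proof.
move=> q_gt0.
have sq : \sum_x csum j F x ^+ 2 = q%:R * \sum_x F x * csum j F x.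
  rewrite -(sum_csum j); apply: eq_bigr => x _.
  rewrite expr2 {2}/csum mulr_sumr /csum; apply: eq_bigr => y _.
  by rewrite -/(csum j F (hupd x j y)) -/(csum j F x) csum_hupd mulrC.
have : 0 <= q%:R * \sum_x F x * csum j F x.
  by rewrite -sq; apply: sumr_ge0 => x _; exact: sqr_ge0.
by rewrite pmulr_rge0 // ltr0n.
Qed.

Lemma csum_eigen_eq0 (S : pred 'I_n) (lam : R) F : (0 < q)%N -> lam < 0 ->
  (forall x, \sum_(j | S j) csum j F x = lam * F x) -> forall x, F x = 0.
Proof.
move=> q_gt0 lam_lt0 eigF x.
have : 0 <= lam * \sum_x F x ^+ 2.
  rewrite mulr_sumr (eq_bigr (fun x => \sum_(j | S j) F x * csum j F x)) => [|y _].
    by rewrite exchange_big /=; apply: sumr_ge0 => j _; exact: csum_form_ge0.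
  by rewrite -mulr_sumr eigF expr2 mulrCA.
rewrite nmulr_rge0 // => sq_le0.
have sq0 : \sum_x F x ^+ 2 = 0.
  by apply/eqP; rewrite eq_le sq_le0 sumr_ge0 // => y _; exact: sqr_ge0.
apply/eqP; rewrite -sqrf_eq0; apply/eqP.
by apply: (psumr_eq0P _ sq0) => // y _; exact: sqr_ge0.
Qed.

Fixpoint face_sum (T : seq 'I_n) F : hvert n q -> R :=
  if T is j :: T' then csum j (face_sum T' F) else F.

Lemma csum_face_sum j T F x : j \in T -> csum j (face_sum T F) x = q%:R * face_sum T F x.
Proof.
elim: T x => [//|i T IH] x /=; rewrite in_cons.
case: (eqVneq j i) => [->|ji] /= jT; first by rewrite csum_csum.
rewrite csumC (eq_csum _ (G := fun z => q%:R * face_sum T F z + 0)) => [|z].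
  by rewrite csum_affine mulr0 addr0.
by rewrite IH // addr0.
Qed.

Lemma face_sum_eigen f (lam C : R) T :
  (forall x, \sum_(j < n) csum j f x = lam * f x + C) ->
  forall x, \sum_(j < n) csum j (face_sum T f) x = lam * face_sum T f x + C * q%:R ^+ size T.
Proof.
move=> eigf; elim: T => [|i T IH] x /=; first by rewrite eigf expr0 mulr1.
under eq_bigr do rewrite csumC.
rewrite -csum_sum (eq_csum _ (G := fun z => lam * face_sum T f z + C * q%:R ^+ size T)).
  by rewrite csum_affine exprS; congr (_ + _); ring.
by move=> z; rewrite IH.
Qed.

Lemma face_sum_eigen_out f (lam C : R) T : uniq T ->
  (forall x, \sum_(j < n) csum j f x = lam * f x + C) ->
  forall x, \sum_(j < n | j \notin T) csum j (face_sum T f) x =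
    (lam - (size T * q)%:R) * face_sum T f x + C * q%:R ^+ size T.
Proof.
move=> uT eigf x; have := face_sum_eigen T eigf x.
rewrite (bigID (mem T)) /= (eq_bigr (fun _ => q%:R * face_sum T f x)) => [|j]; last first.
  exact: csum_face_sum.
rewrite sumr_const (card_uniqP uT) => eigT.
by apply: (addrI (q%:R * face_sum T f x *+ size T)); rewrite eigT -mulr_natr natrM; ring.
Qed.

End CoordinateSums.

Section ColoringLowerBound.
Variables (n q b c : nat) (col : hvert n q -> bool).
Hypothesis col_bc : @is_bc_coloring n q b c col.

Lemma bc_coloring_degree : b <= n * q.-1.
Proof.
case: col_bc => [[u colu] _ col_b _].
by rewrite -(col_b u colu) -(card_hadj_split (fun v => ~~ col v) u) leq_addr.
Qed.

Local Open Scope ring_scope.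

Definition chi x : int := (col x)%:R.

Lemma csum_chi j x :
  csum j chi x = chi x + #|[set y | (y != x j) && col (hupd x j y)]|%:R.
Proof.
rewrite /csum (bigD1 (x j)) //= hupd_id; congr (_ + _).
rewrite -sum1_card natr_sum [RHS]big_mkcond [LHS]big_mkcond /=.
by apply: eq_bigr => y _; rewrite inE /chi; case: (_ != _); case: col.
Qed.

Lemma sum_csum_chi x : (0 < q)%N ->
  \sum_(j < n) csum j chi x = ((n * q)%:R - (b + c)%:R) * chi x + c%:R.
Proof.
move=> q_gt0; case: col_bc => _ _ col_b col_c.
under eq_bigr do rewrite csum_chi.
rewrite big_split /= sumr_const card_ord -natr_sum -card_hadj.
have := card_hadj_split col x; rewrite /chi.
case colx: (col x) => /= deg; last by rewrite col_c ?colx //; ring.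
rewrite col_b // in deg.
have b_le : (b <= n * q.-1)%N by rewrite -deg leq_addl.
have -> : #|[set v | hadj x v & col v]| = (n * q.-1 - b)%N by rewrite -deg addnK.
rewrite natrB // natrM -subn1 natrB // natrD -mulr_natl; ring.
Qed.

Lemma face_count T x : (0 < q)%N -> uniq T -> ((n - size T) * q < b + c)%N ->
  (b + c)%:R * face_sum T chi x = (c * q ^ size T)%:R.
Proof.
move=> q_gt0 uT small; set m := size T.
have mn : (m <= n)%N by rewrite -(size_enum_ord n) uniq_leq_size // => j; rewrite mem_enum.
pose mu : int := ((n - m) * q)%:R - (b + c)%:R.
pose h y := (b + c)%:R * face_sum T chi y - (c * q ^ m)%:R.
have eig_h y : \sum_(j < n | j \notin T) csum j h y = mu * h y.
  rewrite (eq_bigr (fun j => (b + c)%:R * csum j (face_sum T chi) y +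
                             q%:R * - (c * q ^ m)%:R)) => [|j _]; last exact: csum_affine.
  rewrite big_split /= -mulr_sumr (face_sum_eigen_out uT (sum_csum_chi ^~ q_gt0)).
  rewrite sumr_const card_notin // /h /mu -/m -[_ *+ (n - m)]mulr_natr !natrM natrX natrB //; ring.
have mu_lt0 : mu < 0 by rewrite subr_lt0 ltr_nat.
by apply/eqP; rewrite -subr_eq0 -/(h x) (csum_eigen_eq0 q_gt0 mu_lt0 eig_h).
Qed.

Lemma bc_coloring_lower_bound d c' k : (1 < q)%N -> (0 < c)%N -> (0 < k)%N ->
  (b + c = d * q ^ k)%N -> c = (d * c')%N -> coprime q c' -> ((b + c).-1 %/ q + k <= n)%N.
Proof.
move=> q_gt1 c_gt0 k_gt0 Ebc Ec qc'.
have d_gt0 : (0 < d)%N by move: c_gt0; rewrite Ec muln_gt0 => /andP [].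
(* [X] is the largest number of fixed coordinates allowed by [face_count]. *)
set X := ((b + c).-1 %/ q)%N; set m := (n - minn n X)%N.
pose T := take m (enum 'I_n).
have sizeT : size T = m by rewrite size_takel // size_enum_ord leq_subr.
have uT : uniq T by rewrite take_uniq // enum_uniq.
have small : ((n - size T) * q < b + c)%N.
  rewrite sizeT subKn ?geq_minl //.
  apply: (@leq_ltn_trans (X * q)); first by rewrite leq_mul2r geq_minr orbT.
  by apply: leq_ltn_trans (leq_divM _ _) _; rewrite prednK // addn_gt0 c_gt0 orbT.
have [x _] : exists x, col x by case: col_bc.
have := congr1 absz (face_count x (ltnW q_gt1) uT small).
rewrite abszM !natz !absz_nat Ebc Ec -!mulnA sizeT => /eqP.
rewrite eqn_pmul2l // => /eqP E.
have : (q ^ k %| q ^ m)%N by rewrite -(Gauss_dvdr _ (coprimeXl k qc')) -E dvdn_mulr.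
rewrite dvdn_Pexp2l // /m; lia.
Qed.

End ColoringLowerBound.

Section DropLast.
Variables n q : nat.

Definition drop_last (u : hvert n.+1 q) : hvert n q :=
  [ffun i => u (widen_ord (leqnSn n) i)].

Lemma drop_last_hupd_widen u i y :
  drop_last (hupd u (widen_ord (leqnSn n) i) y) = hupd (drop_last u) i y.
Proof. by apply/ffunP => i'; rewrite !ffunE. Qed.

Lemma drop_last_hupd_max u y : drop_last (hupd u ord_max y) = drop_last u.
Proof.
apply/ffunP => i; rewrite !ffunE.
suff /negbTE -> : widen_ord (leqnSn n) i != ord_max by [].
by rewrite -val_eqE /= neq_ltn ltn_ord.
Qed.

Lemma card_hadj_drop_last (P : pred (hvert n q)) u :
  #|[set v | hadj u v & P (drop_last v)]| =
  #|[set v | hadj (drop_last u) v & P v]| + P (drop_last u) * q.-1.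
Proof.
rewrite !card_hadj big_ord_recr /=; congr (_ + _).
  by apply: eq_bigr => i _; apply: eq_card => y; rewrite !inE drop_last_hupd_widen !ffunE.
rewrite (eq_card (B := [pred y | (y != u ord_max) && P (drop_last u)])) => [|y]; last first.
  by rewrite !inE drop_last_hupd_max.
case: (P (drop_last u)) => /=; last by apply: eq_card0 => y; rewrite !inE andbF.
rewrite mul1n; have := cardC1 (u ord_max); rewrite card_ord => <-.
by apply: eq_card => y; rewrite !inE andbT.
Qed.

Lemma has_bc_coloringS b c : 0 < q -> has_bc_coloring n q b c -> has_bc_coloring n.+1 q b c.
Proof.
move=> q_gt0 [col [[u colu] [v colv] col_b col_c]].
pose lift (w : hvert n q) : hvert n.+1 q :=
  [ffun i : 'I_n.+1 => oapp w (Ordinal q_gt0) (insub (val i))].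
have liftK w : drop_last (lift w) = w by apply/ffunP => i; rewrite !ffunE /= valK.
exists (fun w => col (drop_last w)); split.
- by exists (lift u); rewrite liftK.
- by exists (lift v); rewrite liftK.
- move=> w colw; rewrite (card_hadj_drop_last (fun z => ~~ col z)) colw /= mul0n addn0.
  exact: col_b.
- move=> w colw; rewrite (card_hadj_drop_last col) (negbTE colw) /= mul0n addn0.
  exact: col_c.
Qed.

End DropLast.

Lemma bc_threshold_exists n q b c :
  0 < q -> has_bc_coloring n q b c -> exists n0, is_threshold b c q n0.
Proof.
move=> q_gt0 col_n.
pose P m := has_bc_coloring m q b c.
have [n0 [[col_n0 n0_min] _]] := Wf_nat.dec_inh_nat_subset_has_unique_least_element
  P (fun m => Classical_Prop.classic (P m)) (ex_intro _ n col_n).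
exists n0 => m; split => [/n0_min/ssrnat.leP //|le_n0m].
by rewrite -(subnK le_n0m); elim: (m - n0) => [//|t IH]; exact: has_bc_coloringS.
Qed.

Section ProjectivePoints.
Variables (F : finFieldType) (k : nat).
Local Open Scope ring_scope.
Implicit Types (v w : 'rV[F]_k) (a : F).

Definition pivot v := [pick i | v 0 i != 0].
Definition pivot_coef v : F := if pivot v is Some i then v 0 i else 1.
Definition pnormal v := (pivot_coef v)^-1 *: v.

Lemma pivot_coef_neq0 v : pivot_coef v != 0.
Proof. by rewrite /pivot_coef /pivot; case: pickP => [i ->|_] //; exact: oner_neq0. Qed.

Lemma pivot_coefK v : pivot_coef v *: pnormal v = v.
Proof. by rewrite /pnormal scalerA mulfV ?pivot_coef_neq0 ?scale1r. Qed.

Lemma pnormalZ a v : a != 0 -> pnormal (a *: v) = pnormal v.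
Proof.
move=> a_neq0; case Ev: (pivot v) => [i|]; last first.
  move: Ev; rewrite /pivot; case: pickP => // v0 _.
  suff -> : v = 0 by rewrite scaler0.
  by apply/rowP => i; rewrite mxE; move: (v0 i) => /negbFE /eqP.
have Eav : pivot (a *: v) = Some i.
  by rewrite -Ev /pivot; apply: eq_pick => j; rewrite mxE mulf_eq0 (negbTE a_neq0).
have vi : v 0 i != 0 by move: Ev; rewrite /pivot; case: pickP => // j vj [<-].
rewrite /pnormal /pivot_coef Ev Eav mxE scalerA; congr (_ *: _).
by rewrite invfM mulrAC mulVf // mul1r.
Qed.

Lemma pnormal_eq0 v : (pnormal v == 0) = (v == 0).
Proof. by rewrite scaler_eq0 invr_eq0 (negbTE (pivot_coef_neq0 v)). Qed.

Lemma pnormal_idem v : pnormal (pnormal v) = pnormal v.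
Proof. by rewrite {2}/pnormal pnormalZ // invr_eq0 pivot_coef_neq0. Qed.

Definition proj_points := [set v | (v != 0) && (pnormal v == v)].

Lemma scale_proj_points_uniq v v' a a' : v \in proj_points -> v' \in proj_points ->
  a != 0 -> a *: v = a' *: v' -> v = v' /\ a = a'.
Proof.
rewrite !inE => /andP [v_neq0 /eqP nv] /andP [_ /eqP nv'] a_neq0 E.
have a'_neq0 : a' != 0.
  apply: contraTneq isT => a'0; move: E; rewrite a'0 scale0r => /eqP.
  by rewrite scaler_eq0 (negbTE a_neq0) (negbTE v_neq0).
have Evv' : v = v' by rewrite -nv -nv' -(pnormalZ v a_neq0) E pnormalZ.
split=> //; apply/eqP; rewrite -subr_eq0; move: E; rewrite -Evv' => /eqP.
by rewrite -subr_eq0 -scalerBl scaler_eq0 (negbTE v_neq0) orbF.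
Qed.

Lemma card_proj_decomp w : w != 0 ->
  #|[set p : 'rV[F]_k * F | [&& p.1 \in proj_points, p.2 != 0 & p.2 *: p.1 == w]]| = 1%N.
Proof.
move=> w_neq0; apply/eqP/cards1P; exists (pnormal w, pivot_coef w); apply/setP => -[v a].
rewrite inE [in RHS]inE /= xpair_eqE; apply/idP/idP.
- case/and3P => Pv a_neq0 /eqP E.
  have Pw : pnormal w \in proj_points by rewrite inE pnormal_eq0 w_neq0 pnormal_idem eqxx.
  have [-> ->] := scale_proj_points_uniq Pv Pw a_neq0 (etrans E (esym (pivot_coefK w))).
  by rewrite !eqxx.
- case/andP => /eqP -> /eqP ->.
  by rewrite inE pnormal_eq0 w_neq0 pnormal_idem pivot_coef_neq0 pivot_coefK !eqxx.
Qed.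

Lemma card_proj_points : (#|proj_points| * #|F|.-1 = #|{: 'rV[F]_k}|.-1)%N.
Proof.
pose D := [set p : 'rV[F]_k * F | (p.1 \in proj_points) && (p.2 != 0)].
have -> : #|{: 'rV[F]_k}|.-1 = #|(fun p => p.2 *: p.1) @: D|.
  rewrite -(cardC1 0); apply: eq_card => w; rewrite inE; apply/idP/imsetP => [w_neq0|].
    exists (pnormal w, pivot_coef w); last by rewrite pivot_coefK.
    by rewrite inE /= inE pnormal_eq0 w_neq0 pnormal_idem eqxx pivot_coef_neq0.
  case=> -[v a]; rewrite inE /= => /andP [Pv a_neq0] ->.
  by rewrite scaler_eq0 negb_or a_neq0; move: Pv; rewrite inE => /andP [].
rewrite card_in_imset => [|[v a] [v' a']]; last first.
  rewrite inE /= => /andP [Pv a0]; rewrite inE /= => /andP [Pv' _] E.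
  by have [-> ->] := scale_proj_points_uniq Pv Pv' a0 E.
rewrite (card_pair (fun v (a : F) => (v \in proj_points) && (a != 0))) -sum1_card big_distrl /=.
rewrite big_mkcond /=; apply: eq_bigr => v _; case: (v \in proj_points) => /=.
  by rewrite mul1n -(cardC1 0); apply: eq_card => a; rewrite !inE.
by apply/esym/eqP; rewrite cards_eq0; apply/eqP/setP => a; rewrite !inE.
Qed.

End ProjectivePoints.

Section SyndromeColoring.
Local Open Scope ring_scope.

Lemma card_translate (V : finZmodType) (z0 : V) (Q : pred V) :
  #|[set w | (w != 0) && Q (z0 + w)]| = #|[set z | (z != z0) && Q z]|.
Proof.
rewrite -[LHS](card_imset _ (addrI z0)); apply: eq_card => z; rewrite [RHS]inE.
apply/imsetP/andP => [[w] | [z_neq Qz]].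
  by rewrite inE => /andP [w_neq0 Qw] ->; rewrite -subr_eq0 addrC addKr.
by exists (z - z0); rewrite ?inE ?subrKC // subr_eq0 z_neq.
Qed.

Variables (F : finFieldType) (k n q d : nat).
Variables (phi : 'I_q -> F) (psi : F -> 'I_q).
Hypotheses (phiK : cancel phi psi) (psiK : cancel psi phi).
Variable cols : 'I_n -> 'rV[F]_k.
Hypothesis cols_neq0 : forall j, cols j != 0.
Hypothesis cols_multiples : forall w, w != 0 ->
  #|[set p : 'I_n * F | (p.2 != 0) && (p.2 *: cols p.1 == w)]| = d.

Definition syndrome (u : hvert n q) := \sum_j phi (u j) *: cols j.

Lemma syndrome_hupd u j y :
  syndrome (hupd u j y) = syndrome u + (phi y - phi (u j)) *: cols j.
Proof.
rewrite /syndrome (bigD1 j) // [in RHS](bigD1 j) //= hupd_eq.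
rewrite (eq_bigr (fun i => phi (u i) *: cols i)) => [|i ij]; last by rewrite hupd_neq.
by rewrite scalerBl [RHS]addrC addrA subrK.
Qed.

Lemma card_coord_shift y0 (R : pred F) :
  #|[set y | (y != y0) && R (phi y - phi y0)]| = #|[set a | (a != 0) && R a]|.
Proof.
transitivity #|[set z | (z != phi y0) && R (z - phi y0)]|.
  rewrite -(on_card_preimset (onW_bij _ (Bijective phiK psiK))).
  by apply: eq_card => y; rewrite !inE (can_eq phiK).
rewrite -(card_translate (phi y0) (fun z => R (z - phi y0))).
by apply: eq_card => a; rewrite !inE (addrC (phi y0)) addrK.
Qed.

Lemma card_hadj_syndrome u (Q : pred 'rV[F]_k) :
  #|[set v | hadj u v & Q (syndrome v)]| = (d * #|[set z | (z != syndrome u) && Q z]|)%N.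
Proof.
pose S j := [set a : F | (a != 0) && Q (syndrome u + a *: cols j)].
rewrite card_hadj (eq_bigr (fun j => #|S j|)) => [|j _]; last first.
  rewrite -(card_coord_shift (u j) (fun a => Q (syndrome u + a *: cols j))).
  by apply: eq_card => y; rewrite !inE syndrome_hupd.
rewrite -(card_pair (fun j (a : F) => (a != 0) && Q (syndrome u + a *: cols j))) -sum1_card.
rewrite (partition_big (fun p => p.2 *: cols p.1) (fun w => (w != 0) && Q (syndrome u + w)))
  => [|[j a]]; last first.
  rewrite inE /= => /andP [a_neq0 ->]; rewrite andbT scaler_eq0 negb_or a_neq0.
  exact: cols_neq0.
rewrite -card_translate (eq_bigr (fun _ => d)) => [|w /andP [w_neq0 Qw]].
  by rewrite sum_nat_const mulnC; congr (_ * _)%N; apply: eq_card => w; rewrite !inE.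
rewrite -(cols_multiples w_neq0) -sum1_card; apply: eq_bigl => -[j a]; rewrite !inE /=.
by apply/andP/andP => [[/andP [a0 _] /eqP <-] | [a0 /eqP E]]; rewrite ?eqxx ?a0 ?E ?Qw.
Qed.

Lemma syndrome_coloring (T : {set 'rV[F]_k}) :
  (0 < #|T| < #|{: 'rV[F]_k}|)%N -> (0 < d)%N ->
  has_bc_coloring n q (d * #|~: T|) (d * #|T|).
Proof.
move=> /andP [T_gt0 T_lt] d_gt0.
have TC_gt0 : (0 < #|~: T|)%N by move: T_lt; rewrite -(cardsC T) -{1}[#|T|]addn0 ltn_add2l.
have out_T u : syndrome u \in T ->
    #|[set v | hadj u v & syndrome v \notin T]| = (d * #|~: T|)%N.
  move=> uT; rewrite (card_hadj_syndrome u (fun z => z \notin T)); congr (_ * _)%N.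
  by apply: eq_card => z; rewrite !inE; case: eqVneq => // ->; rewrite uT.
have in_T u : syndrome u \notin T ->
    #|[set v | hadj u v & syndrome v \in T]| = (d * #|T|)%N.
  move=> uT; rewrite (card_hadj_syndrome u (mem T)); congr (_ * _)%N.
  by apply: eq_card => z; rewrite !inE; case: eqVneq => // ->; rewrite (negbTE uT).
have nbr_exists (P : pred (hvert n q)) u :
    (0 < #|[set v | hadj u v & P v]|)%N -> exists v, P v.
  by rewrite card_gt0 => /set0Pn [v]; rewrite inE => /andP [_ Pv]; exists v.
pose u0 : hvert n q := [ffun => psi 0].
exists (fun u => syndrome u \in T); split; [| | exact: out_T | exact: in_T].
- case: (boolP (syndrome u0 \in T)) => u0T; first by exists u0.
  by apply: (nbr_exists _ u0); rewrite in_T // muln_gt0 d_gt0.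
- case: (boolP (syndrome u0 \in T)) => u0T; last by exists u0.
  by apply: (nbr_exists _ u0); rewrite out_T // muln_gt0 d_gt0.
Qed.

End SyndromeColoring.

Section ProjectiveCode.
Variables (F : finFieldType) (k d : nat).
Local Open Scope ring_scope.

(* Column indices of a parity-check matrix of the [d]-fold repeated projective
   (Hamming) code: [d] copies of a normalised representative of each point. *)
Definition pcode_index := [pred x : 'I_d * 'rV[F]_k | x.2 \in proj_points F k].
Definition pcode_col (j : 'I_#|pcode_index|) := (enum_val j).2.

Lemma sum_pcode_index (G : 'rV[F]_k -> nat) :
  (\sum_(x in pcode_index) G x.2 = d * \sum_(v in proj_points F k) G v)%N.
Proof.
rewrite (eq_bigl (fun x => predT x.1 && (x.2 \in proj_points F k))) //.
rewrite -(pair_big_dep predT (fun _ v => v \in proj_points F k) (fun _ v => G v)) /=.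
by rewrite sum_nat_const card_ord.
Qed.

Lemma card_pcode_index : #|pcode_index| = (d * #|proj_points F k|)%N.
Proof. by rewrite -!sum1_card (sum_pcode_index (fun=> 1%N)). Qed.

Lemma pcode_col_neq0 j : pcode_col j != 0.
Proof. by have := enum_valP j; rewrite /pcode_col unfold_in /= inE => /andP []. Qed.

Lemma pcode_col_multiples w : w != 0 ->
  #|[set p : 'I_#|pcode_index| * F | (p.2 != 0) && (p.2 *: pcode_col p.1 == w)]| = d.
Proof.
move=> w_neq0; pose G (v : 'rV[F]_k) := #|[set a : F | (a != 0) && (a *: v == w)]|.
rewrite (card_pair (fun j (a : F) => (a != 0) && (a *: pcode_col j == w))).
rewrite -(big_enum_val (fun x : 'I_d * 'rV[F]_k => G x.2)) sum_pcode_index.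
rewrite -[RHS]muln1 -[X in _ = _ * X](card_proj_decomp w_neq0).
rewrite (card_pair (fun v (a : F) => [&& v \in proj_points F k, a != 0 & a *: v == w])).
congr (_ * _)%N; rewrite big_mkcond /=; apply: eq_bigr => v _.
case: (v \in proj_points F k) => /=; first by apply: eq_card => a; rewrite !inE.
by apply/esym/eqP; rewrite cards_eq0; apply/eqP/setP => a; rewrite !inE.
Qed.

End ProjectiveCode.

Lemma projective_code_coloring (F : finFieldType) k d c' :
  0 < d -> 0 < c' < #|F| ^ k ->
  exists n, n * #|F|.-1 = d * (#|F| ^ k).-1 /\
            has_bc_coloring n #|F| (d * (#|F| ^ k - c')) (d * c').
Proof.
move=> d_gt0 /andP [c'_gt0 c'_lt].
have cardV : #|{: 'rV[F]_k}| = #|F| ^ k by rewrite card_mx mul1n.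
pose T := [set v : 'rV[F]_k | v \in take c' (enum 'rV[F]_k)].
have T_card : #|T| = c'.
  transitivity (size (take c' (enum 'rV[F]_k))); last by rewrite size_takel // -cardT cardV ltnW.
  by rewrite -(card_uniqP (take_uniq _ (enum_uniq _))); apply: eq_card => v; rewrite inE.
have TC_card : #|~: T| = #|F| ^ k - c' by rewrite -T_card -cardV -(cardsC T) addKn.
exists #|pcode_index F k d|; split.
  by rewrite card_pcode_index -mulnA card_proj_points cardV.
rewrite -TC_card -T_card.
apply: (syndrome_coloring enum_valK enum_rankK (@pcode_col_neq0 F k d)
  (@pcode_col_multiples F k d)) => //.
by rewrite T_card cardV c'_gt0.
Qed.

Lemma coprime_div_gcdn b c : 0 < gcdn b c -> coprime (b %/ gcdn b c) (c %/ gcdn b c).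
Proof.
move=> d_gt0; rewrite /coprime -(eqn_pmul2l d_gt0) muln_gcdr muln1.
by rewrite !muln_divA ?dvdn_gcdl ?dvdn_gcdr // !mulKn.
Qed.

Section ReducedParameters.
Variables q b c k : nat.
Hypotheses (b_gt0 : 0 < b) (c_gt0 : 0 < c).
Let d := gcdn b c.
Hypothesis reduced_sum : b %/ d + c %/ d = q ^ k.

Let d_gt0 : 0 < d. Proof. by rewrite gcdn_gt0 b_gt0. Qed.

Lemma reduced_decomp :
  [/\ b = d * (b %/ d), c = d * (c %/ d), 0 < b %/ d, 0 < c %/ d & coprime (q ^ k) (c %/ d)].
Proof.
have Eb : b = d * (b %/ d) by rewrite mulnC divnK ?dvdn_gcdl.
have Ec : c = d * (c %/ d) by rewrite mulnC divnK ?dvdn_gcdr.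
split=> //; first by move: b_gt0; rewrite {1}Eb muln_gt0 => /andP [].
  by move: c_gt0; rewrite {1}Ec muln_gt0 => /andP [].
rewrite -reduced_sum coprime_sym /coprime gcdnDr -/(coprime (c %/ d) (b %/ d)).
by rewrite coprime_sym coprime_div_gcdn.
Qed.

Lemma reduced_coloring p s : prime p -> 0 < s -> q = p ^ s ->
  exists n, n * (q - 1) = b + c - d /\ has_bc_coloring n q b c.
Proof.
move=> p_pr s_gt0 Eq; have [Eb Ec b'_gt0 c'_gt0 _] := reduced_decomp.
have [F _ cardF] := pPrimePowerField p_pr s_gt0; rewrite -Eq in cardF.
have c'_bounds : 0 < c %/ d < #|F| ^ k.
  by rewrite c'_gt0 cardF -reduced_sum -{1}(add0n (c %/ d)) ltn_add2r.
have [n [En col_n]] := projective_code_coloring d_gt0 c'_bounds.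
rewrite cardF -reduced_sum addnK -Eb -Ec in En col_n.
by exists n; rewrite subn1 En -subn1 mulnBr muln1 mulnDr -Eb -Ec.
Qed.

Lemma reduced_lower_bound n (col : hvert n q -> bool) : 1 < q -> 0 < k ->
  @is_bc_coloring n q b c col -> (b + c).-1 %/ q + k <= n.
Proof.
move=> q_gt1 k_gt0 col_bc; have [Eb Ec _ _ cop] := reduced_decomp.
apply: (bc_coloring_lower_bound col_bc q_gt1 c_gt0 k_gt0 _ Ec).
  by rewrite {1}Eb {1}Ec -mulnDr reduced_sum.
by rewrite -(coprime_pexpl _ _ k_gt0).
Qed.

End ReducedParameters.

Lemma ler_nat_divr (R : realFieldType) a m n : (0 < m)%N -> (a <= n * m)%N ->
  (a%:R / m%:R <= n%:R :> R)%R.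
Proof. by move=> m_gt0 le_a; rewrite ler_pdivrMr ?ltr0n // -natrM ler_nat. Qed.

Lemma ler_nat_divl (R : realFieldType) a m n : (0 < m)%N -> (n * m <= a)%N ->
  (n%:R <= a%:R / m%:R :> R)%R.
Proof. by move=> m_gt0 le_a; rewrite ler_pdivlMr ?ltr0n // -natrM ler_nat. Qed.

Lemma ler_nat_ceil_div (R : realFieldType) a m k n : (0 < m)%N -> (0 < a)%N ->
  (a.-1 %/ m + k <= n)%N -> (a%:R / m%:R + k%:R - 1 <= n%:R :> R)%R.
Proof.
move=> m_gt0 a_gt0 le_n; have := ltn_ceil a.-1 m_gt0; rewrite prednK // => ceil_a.
have := ler_nat_divr R m_gt0 ceil_a; rewrite -(ler_nat R) in le_n.
rewrite -addn1 !natrD in le_n *; lra.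
Qed.

Theorem theorem9 (p s q b c k : nat) :
  prime p -> 0 < s -> q = p ^ s ->
  0 < b -> 0 < c -> 0 < k ->
  b %/ gcdn b c + c %/ gcdn b c = q ^ k ->
  admissible b c q /\
  exists n0 : nat, is_threshold b c q n0 /\
    (((b%:R / (q - 1)%:R : rat) <= n0%:R)%R /\
     ((b + c)%:R / q%:R + k%:R - 1 <= (n0%:R : rat))%R) /\
    ((n0%:R : rat) <= (b + c - gcdn b c)%:R / (q - 1)%:R)%R.
Proof.
move=> p_pr s_gt0 Eq b_gt0 c_gt0 k_gt0 Ebc.
have q_gt1 : 1 < q by rewrite Eq (ltn_exp2l 0) ?prime_gt1.
have q1_gt0 : 0 < q - 1 by rewrite subn_gt0.
have [n [En col_n]] := reduced_coloring b_gt0 c_gt0 Ebc p_pr s_gt0 Eq.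
have [n0 thr] := bc_threshold_exists (ltnW q_gt1) col_n.
split; [by exists n | exists n0; split => //].
have [col col_bc] := (thr n0).2 (leqnn n0).
split; [split|].
- by apply: ler_nat_divr _ q1_gt0 _; rewrite subn1; exact: bc_coloring_degree col_bc.
- apply: ler_nat_ceil_div _ (ltnW q_gt1) (ltn_addl b c_gt0) _.
  exact: (reduced_lower_bound b_gt0 c_gt0 Ebc q_gt1 k_gt0 col_bc).
- by apply: ler_nat_divl _ q1_gt0 _; rewrite -En leq_mul2r (thr n).1 ?orbT.
Qed.
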